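(* Let $a\ge 1$ and let $v_1,\dots,v_n$ be $a$-submodular valuations on a finite set of items $X=\{1,\dots,m\}$. Consider the greedy algorithm: start with $S_1=\dots=S_n=\emptyset$; for $x=1,\dots,m$ in turn, let $j$ be a bidder maximizing $v_j(S_j\cup\{x\})-v_j(S_j)$ and set $S_j\leftarrow S_j\cup\{x\}$. Then the resulting allocation satisfies $\sum_i v_i(S_i)\ge\frac{1}{1+a}\max\sum_i v_i(T_i)$, the maximum over all partitions $(T_1,\dots,T_n)$ of $X$; i.e., the greedy algorithm is a $(1+a)$-approximation.
   Context: A valuation on a finite set $X$ is a function $v:2^X\to\mathbb{R}_{\ge 0}$ with $v(\emptyset)=0$ and monotone under inclusion. For $W\subseteq X$, the marginal valuation is $v(A\mid W)=v(A\cup W)-v(W)$ for $A\subseteq X\setminus W$. A valuation $w$ exhibits $a$-bounded complementarities if $w(A\cup\{x\})\le w(A)+a\,w(\{x\})$ for every set $A$ and item $x$. A valuation $v$ is $a$-submodular if for every $W\subseteq X$ the marginal valuation $v(\cdot\mid W)$ exhibits $a$-bounded complementarities. *)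

(* Items X = 'I_m (item x+1 of the paper is ordinal x), bidders 'I_n. *)
From mathcomp Require Import all_boot all_order all_algebra.
Set Implicit Arguments. Unset Strict Implicit. Unset Printing Implicit Defensive.
Import Order.TTheory GRing.Theory Num.Theory.
Local Open Scope ring_scope.

Section Defs.
Variables (R : realFieldType) (T : finType).

Definition valuation (v : {set T} -> R) : Prop :=
  [/\ v set0 = 0, (forall A : {set T}, 0 <= v A) & (forall A B : {set T}, A \subset B -> v A <= v B)].

Definition marginal (v : {set T} -> R) (W : {set T}) (A : {set T}) : R :=
  v (A :|: W) - v W.

Definition bounded_compl_on (a : R) (D : {set T}) (w : {set T} -> R) : Prop :=
  forall (A : {set T}) (x : T), A \subset D -> x \in D ->
    w (x |: A) <= w A + a * w [set x].

Definition a_submodular (a : R) (v : {set T} -> R) : Prop :=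
  forall W : {set T}, bounded_compl_on a (~: W) (marginal v W).
End Defs.

(* S k i = bundle of bidder i after the first k items were processed.
   Any tie-breaking among maximizing bidders is allowed. *)
Definition greedy_run (R : realFieldType) (n m : nat)
  (v : 'I_n -> {set 'I_m} -> R) (S : nat -> 'I_n -> {set 'I_m}) : Prop :=
  (forall i, S 0%N i = set0) /\
  (forall (k : nat) (hk : (k < m)%N), exists j : 'I_n,
     (forall j' : 'I_n,
        v j' (Ordinal hk |: S k j') - v j' (S k j')
          <= v j (Ordinal hk |: S k j) - v j (S k j)) /\
     (forall i : 'I_n, S k.+1 i = if i == j then Ordinal hk |: S k i else S k i)).

Definition is_partition (n m : nat) (Tp : 'I_n -> {set 'I_m}) : Prop :=
  (forall i j : 'I_n, i != j -> [disjoint Tp i & Tp j]) /\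
  (\bigcup_(i : 'I_n) Tp i = [set: 'I_m]).

(* Write g x for the increase of the greedy welfare when item x is allocated;
   it is the largest marginal gain any bidder gets for x at that moment, and
   the g x sum to the final greedy welfare.  For a bidder i with final bundle
   S_i and any U containing S_i, applying a-bounded complementarities to the
   marginal valuation v_i(. | S_i^x), where S_i^x is i's bundle just before x
   was processed, gives v_i(U + x) - v_i(U) <= a g x.  Adding the items of an
   optimal bundle T_i one at a time, v_i(T_i) <= v_i(S_i) + a sum_{x in T_i} g x,
   and summing over the bidders of the partition yields OPT <= (1 + a) GREEDY. *)
From mathcomp Require Import all_boot all_order all_algebra.
From mathcomp Require Import lra.
Set Implicit Arguments. Unset Strict Implicit. Unset Printing Implicit Defensive.
Import Order.TTheory GRing.Theory Num.Theory.
Local Open Scope ring_scope.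

Section MarginalGains.
Variables (R : realFieldType) (T : finType) (v : {set T} -> R).

Lemma valuation_mono : valuation v -> {homo v : A B / A \subset B >-> A <= B}.
Proof. by case. Qed.

Lemma sum_marginal_gains_le (c : T -> R) (W : {set T}) (s : seq T) :
    (forall (U : {set T}) x, W \subset U -> x \in s -> v (x |: U) - v U <= c x) ->
  v (W :|: [set:: s]) - v W <= \sum_(x <- s) c x.
Proof.
elim: s => [|x s IHs] gain_le; first by rewrite set_nil setU0 subrr big_nil.
have le_s : v (W :|: [set:: s]) - v W <= \sum_(y <- s) c y.
  by apply: IHs => U y WU ys; apply: gain_le WU _; rewrite in_cons ys orbT.
have le_x := gain_le (W :|: [set:: s]) x (subsetUl _ _) (mem_head _ _).
by rewrite set_cons setUCA big_cons; lra.
Qed.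

Variables (a : R) (W : {set T}).
Hypotheses (v_val : valuation v) (v_sub : a_submodular a v) (a_ge0 : 0 <= a).

(* The case [x \notin U] is a-bounded complementarities of v(. | W) applied
   to [U :\: W]; for [x \in U] the left side vanishes. *)
Lemma a_submodular_gain_le (U : {set T}) (x : T) : W \subset U ->
  v (x |: U) - v U <= a * (v (x |: W) - v W).
Proof.
move=> WU; have [xU | xNU] := boolP (x \in U).
  rewrite (setUidPr _) ?sub1set // subrr mulr_ge0 // subr_ge0.
  by rewrite valuation_mono // subsetUr.
have xNW : x \in ~: W by rewrite inE; apply: contra xNU; apply: subsetP.
have UDW : U :\: W \subset ~: W by rewrite setDE subsetIr.
have UDWK : U :\: W :|: W = U by rewrite setUC -{2}(setID U W) (setIidPr WU).
have := v_sub UDW xNW; rewrite /marginal -setUA UDWK; lra.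
Qed.

End MarginalGains.

Lemma is_partition_sum (R : realFieldType) (n m : nat) (Tp : 'I_n -> {set 'I_m})
    (f : 'I_m -> R) :
  is_partition Tp -> \sum_(i < n) \sum_(x in Tp i) f x = \sum_(x < m) f x.
Proof.
case=> Tdisj Tcover; rewrite -(partition_disjoint_bigcup _ _ Tdisj) Tcover.
by apply: eq_bigl => x; rewrite inE.
Qed.

Section Greedy.
Variables (R : realFieldType) (n m : nat) (v : 'I_n -> {set 'I_m} -> R).

Definition welfare (A : 'I_n -> {set 'I_m}) : R := \sum_(i < n) v i (A i).

Variable (S : nat -> 'I_n -> {set 'I_m}).
Hypothesis greedyS : greedy_run v S.

Definition greedy_gain (x : 'I_m) : R := welfare (S x.+1) - welfare (S x).

Lemma greedy_run_subset_step k i : (k < m)%N -> S k i \subset S k.+1 i.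
Proof.
move=> km; have [j [_ ->]] := greedyS.2 k km.
by case: (i == j); rewrite ?subsetUr.
Qed.

Lemma greedy_run_subset k i : (k <= m)%N -> S k i \subset S m i.
Proof.
move=> km; apply: (homo_leq_in (D := [pred l | l <= m]%N) (f := S^~ i)
                   (r := fun A B => A \subset B)); rewrite ?inE //.
- by move=> B C D; apply: subset_trans.
- by move=> l1 l2 _ l2m l3 /andP[_ /ltnW /leq_trans]; apply.
- by move=> l _; apply: greedy_run_subset_step.
Qed.

Lemma marginal_le_greedy_gain (x : 'I_m) i :
  v i (x |: S x i) - v i (S x i) <= greedy_gain x.
Proof.
case: x => k km; have [j [j_max S_next]] := greedyS.2 k km.
rewrite /greedy_gain /welfare -sumrB (bigD1 j) //= big1 => [|l /negPf lNj].
  by rewrite S_next eqxx addr0; apply: j_max.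
by rewrite S_next lNj subrr.
Qed.

Lemma sum_greedy_gain : (forall i, v i set0 = 0) ->
  \sum_(x < m) greedy_gain x = welfare (S m).
Proof.
move=> v_set0.
rewrite -(big_mkord xpredT (fun k => welfare (S k.+1) - welfare (S k))).
rewrite telescope_sumr //; suff -> : welfare (S 0) = 0 by rewrite subr0.
by rewrite /welfare big1 // => i _; rewrite greedyS.1.
Qed.

Variable a : R.
Hypotheses (v_val : forall i, valuation (v i)) (v_sub : forall i, a_submodular a (v i)).
Hypothesis a_ge0 : 0 <= a.

Lemma greedy_bundle_bound i (B : {set 'I_m}) :
  v i B <= v i (S m i) + a * \sum_(x in B) greedy_gain x.
Proof.
have gain_le (U : {set 'I_m}) x : S m i \subset U ->
    v i (x |: U) - v i U <= a * greedy_gain x.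
  move=> SU; have SxU := subset_trans (greedy_run_subset i (ltnW (ltn_ord x))) SU.
  apply: le_trans (a_submodular_gain_le (v_val i) (v_sub i) a_ge0 x SxU) _.
  by apply: ler_wpM2l => //; apply: marginal_le_greedy_gain.
have := sum_marginal_gains_le (s := enum B) (fun U x SU _ => gain_le U x SU).
rewrite set_enum -big_enum -mulr_sumr.
have := valuation_mono (v_val i) (subsetUr (S m i) B); lra.
Qed.

End Greedy.

Theorem theorem13 (R : realFieldType) (a : R) (n m : nat)
  (v : 'I_n -> {set 'I_m} -> R)
  (ha : 1 <= a)
  (hval : forall i, valuation (v i))
  (hsub : forall i, a_submodular a (v i))
  (S : nat -> 'I_n -> {set 'I_m})
  (hS : greedy_run v S) :
  forall Tp : 'I_n -> {set 'I_m}, is_partition Tp ->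
    (1 + a)^-1 * (\sum_(i < n) v i (Tp i)) <= \sum_(i < n) v i (S m i).
Proof.
move=> Tp partTp; have a_ge0 : 0 <= a by lra.
have v_set0 i : v i set0 = 0 by case: (hval i).
have : welfare v Tp <= welfare v (S m) + a * welfare v (S m).
  rewrite -{2}(sum_greedy_gain hS v_set0) -(is_partition_sum _ partTp).
  rewrite mulr_sumr -big_split /=; apply: ler_sum => i _.
  exact: greedy_bundle_bound.
rewrite ler_pdivrMl /welfare; lra.
Qed.
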